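(* Let $b\in(1,n)$ be an integer dividing $n$, and let $\mathbf{M}\in\mathcal{M}\mathcal{M}^{*(b,n)}$ be an $n\times n$ matrix such that (1) $\mathbf{M}$ is invertible and (2) $\mathbf{M}$ can be written as $(\mathbf{P}_{(b,n)}^\top\mathbf{L}_1\mathbf{P}_{(b,n)})\mathbf{R}(\mathbf{P}_{(b,n)}^\top\mathbf{L}_2\mathbf{P}_{(b,n)})$ with $\mathbf{L}_1,\mathbf{L}_2\in\mathcal{B}\mathcal{D}^{(n/b,n)}$, $\mathbf{R}\in\mathcal{B}\mathcal{D}^{(b,n)}$, and $\mathbf{R}$ having no zero entries in its diagonal blocks. Then there is an algorithm that, given $b$ and $\mathbf{M}$, runs in time $O(n^3/b)$ and finds $\mathbf{L}_1,\mathbf{L}_2\in\mathcal{B}\mathcal{D}^{(n/b,n)}$ and $\mathbf{R}\in\mathcal{B}\mathcal{D}^{(b,n)}$ with $\mathbf{M}=(\mathbf{P}_{(b,n)}^\top\mathbf{L}_1\mathbf{P}_{(b,n)})\mathbf{R}(\mathbf{P}_{(b,n)}^\top\mathbf{L}_2\mathbf{P}_{(b,n)})$.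
   Context: Indices are 0-based; matrices over $\mathbb{F}\in\{\mathbb{R},\mathbb{C}\}$, $^*$ is conjugate transpose. For $c$ dividing $n$: $\mathcal{B}\mathcal{D}^{(c,n)}$ is the class of $n\times n$ block-diagonal matrices with $n/c$ arbitrary $c\times c$ diagonal blocks; $\mathcal{D}\mathcal{B}^{(c,n)}$ is the class of $n\times n$ matrices which, partitioned into an $(n/c)\times(n/c)$ grid of $c\times c$ blocks, have every block diagonal. $\mathcal{M}^{(b,n)}$ is the set of products $\mathbf{L}\mathbf{R}$ with $\mathbf{L}\in\mathcal{D}\mathcal{B}^{(b,n)}$, $\mathbf{R}\in\mathcal{B}\mathcal{D}^{(b,n)}$; $\mathcal{M}\mathcal{M}^{*(b,n)}$ is the set of products $\mathbf{M}_1\mathbf{M}_2^*$ with $\mathbf{M}_1,\mathbf{M}_2\in\mathcal{M}^{(b,n)}$. For $0\le i<n$ write $i=i_1b+i_0$ with $0\le i_0<b$ and set $\sigma_{(b,n)}(i)=i_0\frac{n}{b}+i_1$; $\mathbf{P}_{(b,n)}$ is the permutation matrix of $\sigma_{(b,n)}$, i.e. $(\mathbf{P}_{(b,n)}\mathbf{X}\mathbf{P}_{(b,n)}^\top)[\sigma_{(b,n)}(i),\sigma_{(b,n)}(j)]=\mathbf{X}[i,j]$. Running time counts multiplication, inversion and eigendecomposition/diagonalization (to fixed precision) of $k\times k$ matrices as $O(k^3)$ operations. *)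

From HB Require Import structures.
From mathcomp Require Import all_boot all_order all_algebra.
From mathcomp Require Import complex.
Set Implicit Arguments. Unset Strict Implicit. Unset Printing Implicit Defensive.
Import Order.TTheory GRing.Theory Num.Theory.
Local Open Scope ring_scope.

Definition is_BD (F : fieldType) (c n : nat) (A : 'M[F]_n) : Prop :=
  forall i j : 'I_n, (i %/ c)%N != (j %/ c)%N -> A i j = 0.

(* DB^(c,n): (n/c) x (n/c) grid of c x c blocks, every block diagonal *)
Definition is_DB (F : fieldType) (c n : nat) (A : 'M[F]_n) : Prop :=
  forall i j : 'I_n, (i %% c)%N != (j %% c)%N -> A i j = 0.

Definition in_M (F : fieldType) (b n : nat) (A : 'M[F]_n) : Prop :=
  exists L R : 'M[F]_n, is_DB b L /\ is_BD b R /\ A = L *m R.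

Definition ctrmx (F : fieldType) (conjf : F -> F) (n : nat) (A : 'M[F]_n) : 'M[F]_n :=
  (map_mx conjf A)^T.

Definition in_MMstar (F : fieldType) (conjf : F -> F) (b n : nat) (A : 'M[F]_n) : Prop :=
  exists M1 M2 : 'M[F]_n, in_M b M1 /\ in_M b M2 /\ A = M1 *m ctrmx conjf M2.

Definition sigma_bn (b n i : nat) : nat := ((i %% b) * (n %/ b) + i %/ b)%N.

(* P_(b,n): permutation matrix with P[sigma i, i] = 1, so that
   (P X P^T)[sigma i, sigma j] = X[i, j] *)
Definition Pbn (F : fieldType) (b n : nat) : 'M[F]_n :=
  \matrix_(r < n, c < n) ((r : nat) == sigma_bn b n c)%:R.

Definition PLP_R_PLP (F : fieldType) (b n : nat) (L1 R L2 : 'M[F]_n) : 'M[F]_n :=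
  ((Pbn F b n)^T *m L1 *m Pbn F b n) *m R *m ((Pbn F b n)^T *m L2 *m Pbn F b n).

(* Programs are trees of primitive operations over an ABSTRACT scalar type V;
   an algorithm is polymorphic in V, hence it can only obtain scalars through
   the primitives below.  Control flow (on nat/bool data) is free. *)
Inductive prog (V A : Type) : Type :=
| PRet    : A -> prog V A
| PLit    : int -> (V -> prog V A) -> prog V A
| PAdd    : V -> V -> (V -> prog V A) -> prog V A
| POpp    : V -> (V -> prog V A) -> prog V A
| PMul    : V -> V -> (V -> prog V A) -> prog V A
| PInv    : V -> (V -> prog V A) -> prog V A
| PConj   : V -> (V -> prog V A) -> prog V A
| PIsZero : V -> (bool -> prog V A) -> prog V A
| PMatMul : forall k : nat, 'M[V]_k -> 'M[V]_k -> ('M[V]_k -> prog V A) -> prog V A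
| PMatInv : forall k : nat, 'M[V]_k -> ('M[V]_k -> prog V A) -> prog V A
| PDiag   : forall k : nat, 'M[V]_k -> ('M[V]_k -> 'M[V]_k -> prog V A) -> prog V A.

Definition diagonalization (F : fieldType) (k : nat) (A Q D : 'M[F]_k) : Prop :=
  Q \in unitmx /\ is_diag_mx D /\ A = Q *m D *m invmx Q.

(* wp p budget Post: every execution of p over F (for every admissible answer
   of the eigendecomposition oracle) succeeds (no division by zero, no
   inversion of a singular matrix, no eigendecomposition of a
   non-diagonalizable matrix), uses total cost at most budget, and returns
   a value satisfying Post. *)
Fixpoint wp (F : fieldType) (conjf : F -> F) (A : Type) (p : prog F A)
    (budget : nat) (Post : A -> Prop) {struct p} : Prop :=
  match p with
  | PRet a => Post a
  | PLit z c => (0 < budget)%N /\ wp conjf (c (z%:~R)) budget.-1 Post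
  | PAdd x y c => (0 < budget)%N /\ wp conjf (c (x + y)) budget.-1 Post
  | POpp x c => (0 < budget)%N /\ wp conjf (c (- x)) budget.-1 Post
  | PMul x y c => (0 < budget)%N /\ wp conjf (c (x * y)) budget.-1 Post
  | PInv x c => (0 < budget)%N /\ x != 0 /\ wp conjf (c (x^-1)) budget.-1 Post
  | PConj x c => (0 < budget)%N /\ wp conjf (c (conjf x)) budget.-1 Post
  | PIsZero x c => (0 < budget)%N /\ wp conjf (c (x == 0)) budget.-1 Post
  | PMatMul k X Y c =>
      (k ^ 3 < budget)%N /\ wp conjf (c (X *m Y)) (budget - (k ^ 3).+1) Post
  | PMatInv k X c =>
      (k ^ 3 < budget)%N /\ X \in unitmx /\
      wp conjf (c (invmx X)) (budget - (k ^ 3).+1) Post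
  | PDiag k X c =>
      (k ^ 3 < budget)%N /\ (exists Q D, diagonalization X Q D) /\
      forall Q D, diagonalization X Q D -> wp conjf (c Q D) (budget - (k ^ 3).+1) Post
  end.

(* Type of algorithms: given b and M (n is the size of M), output (L1, R, L2). *)
Definition algorithm : Type :=
  forall (V : Type) (n : nat), nat -> 'M[V]_n -> prog V ('M[V]_n * 'M[V]_n * 'M[V]_n).

Definition solves_within (alg : algorithm) (C : nat) (F : fieldType) (conjf : F -> F) : Prop :=
  forall (n b : nat) (M : 'M[F]_n),
    (1 < b)%N -> (b < n)%N -> (b %| n)%N ->
    in_MMstar conjf b M ->
    M \in unitmx ->
    (exists L1 R L2 : 'M[F]_n,
        is_BD (n %/ b) L1 /\ is_BD (n %/ b) L2 /\ is_BD b R /\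
        (forall i j : 'I_n, (i %/ b)%N = (j %/ b)%N -> R i j != 0) /\
        M = PLP_R_PLP b L1 R L2) ->
    wp conjf (alg F n b M) (C * (n ^ 3 %/ b))
      (fun out => let: (L1, R, L2) := out in
         is_BD (n %/ b) L1 /\ is_BD (n %/ b) L2 /\ is_BD b R /\
         M = PLP_R_PLP b L1 R L2).

From HB Require Import structures.
From mathcomp Require Import all_boot all_order all_algebra.
From mathcomp Require Import complex zify.
Set Implicit Arguments. Unset Strict Implicit. Unset Printing Implicit Defensive.
Import Order.TTheory GRing.Theory Num.Theory.
Local Open Scope ring_scope.

(* Write indices as [i1 * b + p] with [p < b], and let [N p q] be the (n/b) x (n/b)
   block [M[i1 * b + p, j1 * b + q]].  The hypothesis makes [N p q = A_p D_pq B_q], where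
   [A_p], [B_q] are diagonal blocks of the two permuted block-diagonal factors and [D_pq] is
   diagonal and invertible.  Hence [K_q := N_00^-1 N_0q] and
   [X_pq := N_p0^-1 N_pq K_q^-1 = B_0^-1 (D_p0^-1 D_pq D_0q^-1 D_00) B_0] form a family of
   b^2 matrices with a common diagonalizing basis [S].  It is found by refinement:
   each [X_pq], conjugated by the current basis, commutes with the matrices already made
   diagonal, so it is block diagonal along their joint eigenspaces and each block can be
   diagonalized separately.  Then [N p q = (N_p0 S) (S^-1 X_pq S) (S^-1 K_q)] is the
   required factorization, found with O(b^2) operations on (n/b) x (n/b) matrices,
   i.e. in time O(b^2 (n/b)^3) = O(n^3 / b). *)

Fixpoint pbind (V A B : Type) (p : prog V A) (f : A -> prog V B) : prog V B :=
  match p with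
  | PRet a => f a
  | PLit z c => PLit z (fun x => pbind (c x) f)
  | PAdd x y c => PAdd x y (fun r => pbind (c r) f)
  | POpp x c => POpp x (fun r => pbind (c r) f)
  | PMul x y c => PMul x y (fun r => pbind (c r) f)
  | PInv x c => PInv x (fun r => pbind (c r) f)
  | PConj x c => PConj x (fun r => pbind (c r) f)
  | PIsZero x c => PIsZero x (fun r => pbind (c r) f)
  | PMatMul k X Y c => PMatMul X Y (fun r => pbind (c r) f)
  | PMatInv k X c => PMatInv X (fun r => pbind (c r) f)
  | PDiag k X c => PDiag X (fun Q D => pbind (c Q D) f)
  end.

Fixpoint pmapM V T A (f : T -> prog V A) (s : seq T) : prog V (seq A) :=
  if s is x :: s' then
    pbind (f x) (fun y => pbind (pmapM f s') (fun ys => PRet V (y :: ys)))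
  else PRet V [::].

Fixpoint pfoldM V S T (f : S -> T -> prog V S) (st : S) (s : seq T) : prog V S :=
  if s is x :: s' then pbind (f st x) (fun st' => pfoldM f st' s') else PRet V st.

Definition plit V (z : int) : prog V V := PLit z (@PRet V V).
Definition psub V (x y : V) : prog V V := POpp y (fun y' => PAdd x y' (@PRet V V)).
Definition peq0 V (x : V) : prog V bool := PIsZero x (@PRet V bool).
Definition pmulmx V k (X Y : 'M[V]_k) : prog V 'M[V]_k := PMatMul X Y (@PRet V _).
Definition pinvertmx V k (X : 'M[V]_k) : prog V 'M[V]_k := PMatInv X (@PRet V _).
Definition pdiagonalize V k (X : 'M[V]_k) : prog V ('M[V]_k * 'M[V]_k) :=
  PDiag X (fun Q D => PRet V (Q, D)).

Section WeakestPrecondition.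
Context {F : fieldType} {conjf : F -> F}.
Local Notation wp := (wp conjf).

Lemma wp_mono A (p : prog F A) c c' (P P' : A -> Prop) :
  (c <= c')%N -> (forall a, P a -> P' a) -> wp p c P -> wp p c' P'.
Proof.
elim: p c c' => [a|z f IH|x y f IH|x f IH|x y f IH|x f IH|x f IH|x f IH
  |k X Y f IH|k X f IH|k X f IH] c c' lecc' PP' /=; first exact: PP'.
all: have lecc'1 : (c.-1 <= c'.-1)%N by rewrite -!subn1 leq_sub2r.
all: have lecc'k : forall d, (c - d <= c' - d)%N by move=> d; rewrite leq_sub2r.
all: case=> lt_c wp_f; split; first exact: leq_trans lt_c lecc'.
all: try by apply: IH wp_f.
all: case: wp_f => side wp_f; split=> //.
all: try by apply: IH wp_f.
by move=> Q D QD; apply: IH (wp_f Q D QD).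
Qed.

Lemma wp_le A (p : prog F A) c c' (P : A -> Prop) : (c <= c')%N -> wp p c P -> wp p c' P.
Proof. by move=> le_cc'; apply: wp_mono. Qed.

Lemma wp_bind A B (p : prog F A) (f : A -> prog F B) c1 c2 (P : B -> Prop) :
  wp p c1 (fun a => wp (f a) c2 P) -> wp (pbind p f) (c1 + c2) P.
Proof.
elim: p c1 => [a|z g IH|x y g IH|x g IH|x y g IH|x g IH|x g IH|x g IH
  |k X Y g IH|k X g IH|k X g IH] [|c1] /=.
all: try by move=> h; apply: wp_mono h => //; exact: leq_addl.
all: try by case.
all: case=> lt_c wp_g; split; first exact: leq_trans lt_c (leq_addr _ _).
all: try by apply: IH.
all: try by case: wp_g => side wp_g; split=> //; apply: IH.
all: try by rewrite -addnBAC //; apply: IH.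
all: try by case: wp_g => side wp_g; split=> //; rewrite -addnBAC //; apply: IH.
by case: wp_g => side wp_g; split=> // Q D QD; rewrite -addnBAC //; apply: IH (wp_g Q D QD).
Qed.

Lemma wp_ret A (a : A) (P : A -> Prop) : P a -> wp (PRet F a) 0 P.
Proof. by []. Qed.

Definition computes A (p : prog F A) (c : nat) (v : A) := forall P, P v -> wp p c P.

Lemma wp_bind_computes A B (p : prog F A) (f : A -> prog F B) c1 c2 v P :
  computes p c1 v -> wp (f v) c2 P -> wp (pbind p f) (c1 + c2) P.
Proof. by move=> pv fv; apply/wp_bind/pv. Qed.

Lemma computes_bind A B (p : prog F A) (f : A -> prog F B) c1 c2 v w :
  computes p c1 v -> computes (f v) c2 w -> computes (pbind p f) (c1 + c2) w.
Proof. by move=> pv fw P Pw; apply: wp_bind_computes pv (fw P Pw). Qed.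

Lemma computes_weaken A (p : prog F A) c c' v :
  (c <= c')%N -> computes p c v -> computes p c' v.
Proof. by move=> le_cc' pv P Pv; apply: wp_mono (pv P Pv). Qed.

Lemma computes_ret A (v : A) : computes (PRet F v) 0 v.
Proof. by []. Qed.

Lemma computes_lit0 : computes (plit F 0) 1 0.
Proof. by []. Qed.

Lemma computes_lit1 : computes (plit F 1) 1 1.
Proof. by move=> P P1 /=; rewrite mulr1z. Qed.

Lemma computes_sub (x y : F) : computes (psub x y) 2 (x - y).
Proof. by []. Qed.

Lemma computes_eq0 (x : F) : computes (peq0 x) 1 (x == 0).
Proof. by []. Qed.

Lemma computes_mulmx k (X Y : 'M[F]_k) : computes (pmulmx X Y) (k ^ 3).+1 (X *m Y).
Proof. by move=> P PXY /=; rewrite ?subnn ltnSn. Qed.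

Lemma computes_invertmx k (X : 'M[F]_k) :
  X \in unitmx -> computes (pinvertmx X) (k ^ 3).+1 (invmx X).
Proof. by move=> uX P PX /=; rewrite ?subnn ltnSn. Qed.

Lemma wp_diagonalize k (X : 'M[F]_k) (P : 'M_k * 'M_k -> Prop) :
  (exists Q D, diagonalization X Q D) ->
  (forall Q D, diagonalization X Q D -> P (Q, D)) -> wp (pdiagonalize X) (k ^ 3).+1 P.
Proof. by move=> diagX PQD /=; rewrite ?subnn ltnSn; split=> // Q D /PQD. Qed.

Lemma computes_mapM (T : eqType) A (f : T -> prog F A) (g : T -> A) c (s : seq T) :
  (forall x, x \in s -> computes (f x) c (g x)) ->
  computes (pmapM f s) (size s * c) (map g s).
Proof.
elim: s => [|x s IH] fg /=; first exact: computes_ret.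
rewrite mulSn -[X in computes _ X](addn0 (c + _)) -addnA.
apply: computes_bind (fg x (mem_head _ _)) _.
apply: computes_bind; last exact: computes_ret.
by apply: IH => y ys; apply: fg; rewrite inE ys orbT.
Qed.

Lemma wp_mapM (T : eqType) A (f : T -> prog F A) (c : T -> nat) (P : T -> A -> Prop)
    (y0 : A) (s : seq T) :
  (forall x, x \in s -> wp (f x) (c x) (P x)) ->
  wp (pmapM f s) (\sum_(x <- s) c x)
    (fun ys => forall x, x \in s -> P x (nth y0 ys (index x s))).
Proof.
elim: s => [|x s IH] wp_f //=; rewrite big_cons; apply: wp_bind.
apply: wp_mono (wp_f x (mem_head _ _)) => // y Py.
rewrite -[X in wp _ X _]addn0; apply: wp_bind.
apply: wp_mono (IH _) => [//|ys Pys x'|x' s_x']; last by apply: wp_f; rewrite inE s_x' orbT.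
by case: eqVneq => [<-|neq_x] //=; rewrite inE eq_sym (negPf neq_x) => /Pys.
Qed.

Lemma wp_foldM S T (f : S -> T -> prog F S) (c : T -> nat) (s : seq T)
    (Inv : seq T -> S -> Prop) :
  (forall s1 x s2 st, s = s1 ++ x :: s2 -> Inv s1 st ->
     wp (f st x) (c x) (Inv (rcons s1 x))) ->
  forall st, Inv [::] st -> wp (pfoldM f st s) (\sum_(x <- s) c x) (Inv s).
Proof.
move=> step; suff gen s2 s1 st : s = s1 ++ s2 -> Inv s1 st ->
    wp (pfoldM f st s2) (\sum_(x <- s2) c x) (Inv s) by move=> st; apply: gen.
elim: s2 s1 st => [|x s2 IH] s1 st def_s Inv_st /=.
  by rewrite cats0 in def_s; rewrite def_s.
rewrite big_cons; apply: wp_bind; apply: wp_mono (step _ _ _ _ def_s Inv_st) => // st'.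
by apply: IH; rewrite def_s cat_rcons.
Qed.

End WeakestPrecondition.

Arguments computes {F} conjf {A} p c v.

Section MatrixFacts.
Variable F : fieldType.

Lemma invmxM k (A B : 'M[F]_k) : A \in unitmx -> B \in unitmx ->
  invmx (A *m B) = invmx B *m invmx A.
Proof.
move=> unitA unitB; have AB_inv : A *m B *m (invmx B *m invmx A) = 1%:M.
  by rewrite !mulmxA mulmxK // mulmxV.
have [unitAB _] := mulmx1_unit AB_inv.
by rewrite -[RHS](mulKmx unitAB) AB_inv mulmx1.
Qed.

Lemma comm_diag_mx k (D E : 'M[F]_k) : is_diag_mx D -> is_diag_mx E -> comm_mx D E.
Proof. by move=> /diag_mxP[d ->] /diag_mxP[e ->]; exact: diag_mx_comm. Qed.

Lemma diag_mulmx k (D E : 'M[F]_k) : is_diag_mx D -> is_diag_mx E -> is_diag_mx (D *m E).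
Proof. by move=> /diag_mxP[d ->] /diag_mxP[e ->]; rewrite mulmx_diag diag_mx_is_diag. Qed.

Lemma diag_invmx k (D : 'M[F]_k) : is_diag_mx D -> is_diag_mx (invmx D).
Proof.
move=> /diag_mxP[d ->]; have [unitD|/invmx_out->] := boolP (diag_mx d \in unitmx); last first.
  exact: diag_mx_is_diag.
have d_neq0 i : d 0 i != 0.
  by move: unitD; rewrite unitmxE det_diag unitfE => /prodf_neq0; apply.
pose e := \row_i (d 0 i)^-1.
have de : diag_mx d *m diag_mx e = 1%:M.
  rewrite mulmx_diag; apply/matrixP => i j; rewrite !mxE.
  by case: eqVneq => [->|_]; rewrite ?mulr0n ?mulr1n // mulfV.
have -> : invmx (diag_mx d) = diag_mx e by rewrite -[RHS](mulKmx unitD) de mulmx1.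
exact: diag_mx_is_diag.
Qed.

Lemma diag_unitmx k (D : 'M[F]_k) : is_diag_mx D -> (forall i, D i i != 0) -> D \in unitmx.
Proof.
move=> /diag_mxP[d ->] d_neq0; rewrite unitmxE det_diag unitfE; apply/prodf_neq0 => i _.
by have := d_neq0 i; rewrite mxE eqxx mulr1n.
Qed.

Lemma mulmx_diagr k (A W : 'M[F]_k) i j : is_diag_mx W -> (A *m W) i j = A i j * W j j.
Proof.
move=> /is_diag_mxP diagW; rewrite mxE (bigD1 j) //= big1 ?addr0 // => l neq_lj.
by rewrite diagW ?mulr0.
Qed.

Lemma mulmx_diagl k (A W : 'M[F]_k) i j : is_diag_mx W -> (W *m A) i j = W i i * A i j.
Proof.
move=> /is_diag_mxP diagW; rewrite mxE (bigD1 i) //= big1 ?addr0 // => l neq_li.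
by rewrite diagW ?mul0r // eq_sym.
Qed.

(* The minimal polynomial of [B] divides that of [Z], so it splits with simple roots. *)
Lemma diagonalization_intertwined m n (V : 'M[F]_(m, n)) (Z : 'M_n) (B : 'M_m) :
  row_free V -> V *m Z = B *m V -> diagonalizable Z -> exists Q D, diagonalization B Q D.
Proof.
case: m V B => [|m] V B freeV VZ diagZ.
  exists 1%:M, 0; split; first exact: unitmx1.
  by split; [exact: mx0_is_diag|rewrite [LHS]flatmx0 [RHS]flatmx0].
case: n V Z freeV VZ diagZ => [|n] V Z freeV VZ diagZ.
  by move: freeV; rewrite /row_free; have := rank_leq_col V; case: (\rank V).
have conjZ : conjmx V Z = B by rewrite /conjmx VZ mulmxKp.
have [P unitP diagB] : diagonalizable B.
  apply/diagonalizableP; move/diagonalizableP: diagZ => [rs uniq_rs minZ].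
  exists rs => //; apply: dvdp_trans minZ; rewrite -conjZ mxminpoly_conj //.
  by rewrite VZ submxMl.
exists (invmx P), (conjmx P B); split; first by rewrite unitmx_inv.
split; first exact: diagB.
by rewrite conjumx // invmxK !mulmxA mulVmx // mul1mx mulmxKV.
Qed.

End MatrixFacts.

(* Entry access by natural numbers, [d] out of range: the programs need it because
   [n %/ b * b] is not convertible to [n]. *)
Definition mx_at V s (d : V) (A : 'M[V]_s) (i j : nat) : V :=
  if insub i : option 'I_s is Some i' then
    if insub j : option 'I_s is Some j' then A i' j' else d
  else d.

Lemma mx_atE V s (d : V) (A : 'M[V]_s) (i j : 'I_s) : mx_at d A i j = A i j.
Proof. by rewrite /mx_at !valK. Qed.

Section LabelClasses.
Variables (T : eqType) (k : nat) (lab : 'I_k -> T).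

Definition lab_class t : seq 'I_k := [seq i <- enum 'I_k | lab i == t].

Definition lab_values : seq T := undup (map lab (enum 'I_k)).

Definition class_ord t (a : 'I_(size (lab_class t))) : 'I_k :=
  tnth (in_tuple (lab_class t)) a.

Definition lab_block V t (Z : 'M[V]_k) : 'M[V]_(size (lab_class t)) :=
  mxsub (@class_ord t) (@class_ord t) Z.

Definition lab_pattern V (z : V) t (Q : 'M[V]_(size (lab_class t))) : 'I_k -> 'I_k -> V :=
  fun i j => mx_at z Q (index i (lab_class t)) (index j (lab_class t)).

Definition lab_assemble V (z : V) (g : T -> 'I_k -> 'I_k -> V) : 'M[V]_k :=
  \matrix_(i, j) if lab i == lab j then g (lab i) i j else z.

Lemma mem_lab_class t i : (i \in lab_class t) = (lab i == t).
Proof. by rewrite mem_filter mem_enum andbT. Qed.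

Lemma uniq_lab_class t : uniq (lab_class t).
Proof. by rewrite filter_uniq ?enum_uniq. Qed.

Lemma lab_class_ord t a : lab (@class_ord t a) = t.
Proof. by apply/eqP; rewrite -mem_lab_class mem_tnth. Qed.

Lemma index_class_ord t a : index (@class_ord t a) (lab_class t) = a.
Proof. by rewrite /class_ord (tnth_nth (class_ord a)) index_uniq ?uniq_lab_class. Qed.

Lemma class_ord_inj t : injective (@class_ord t).
Proof.
by move=> a b eq_ab; apply/val_inj; rewrite /= -(index_class_ord a) eq_ab index_class_ord.
Qed.

Lemma lab_index_lt t i : lab i == t -> (index i (lab_class t) < size (lab_class t))%N.
Proof. by rewrite index_mem mem_lab_class. Qed.

Definition class_index t i (lab_i : lab i == t) : 'I_(size (lab_class t)) :=
  Ordinal (lab_index_lt lab_i).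

Lemma class_indexK t i (lab_i : lab i == t) : class_ord (class_index lab_i) = i.
Proof. by rewrite /class_ord (tnth_nth i) nth_index // mem_lab_class. Qed.

Lemma lab_values_lab i : lab i \in lab_values.
Proof. by rewrite mem_undup map_f ?mem_enum. Qed.

Lemma lab_patternE V (z : V) t Q a b :
  lab_pattern z Q (@class_ord t a) (class_ord b) = Q a b.
Proof. by rewrite /lab_pattern !index_class_ord mx_atE. Qed.

Lemma lab_block_assemble V (z : V) g t :
  lab_block t (lab_assemble z g) = \matrix_(a, b) g t (class_ord a) (class_ord b).
Proof. by apply/matrixP => a b; rewrite !mxE !lab_class_ord eqxx. Qed.

Lemma sum_size_lab_class : (\sum_(t <- lab_values) size (lab_class t))%N = k.
Proof.
have count_lab t : size (lab_class t) = count_mem t (map lab (enum 'I_k)).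
  by rewrite size_filter count_map.
have iterop1 n : iterop n addn 1%N 0%N = n by rewrite Monoid.iteropE iter_addn_0 mul1n.
rewrite (eq_bigr (fun t => iterop (count_mem t (map lab (enum 'I_k))) addn 1%N 0%N)).
  by rewrite big_undup_iterop_count sum1_size size_map size_enum_ord.
by move=> t _; rewrite iterop1 count_lab.
Qed.

End LabelClasses.

Arguments class_ord {T k lab t} a.
Arguments class_ord_inj {T k lab t}.

Section LabelBlockMatrices.
Variables (F : fieldType) (T : eqType) (k : nat) (lab : 'I_k -> T).
Local Notation lab_block := (lab_block lab).

Definition is_blockdiag_mx (Z : 'M[F]_k) := forall i j, lab i != lab j -> Z i j = 0.

Lemma lab_blockE t (Z : 'M[F]_k) i j (lab_i : lab i == t) (lab_j : lab j == t) :
  lab_block t Z (class_index lab_i) (class_index lab_j) = Z i j.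
Proof. by rewrite mxE !class_indexK. Qed.

Lemma sum_lab_class t (G : 'I_k -> F) :
  (forall l, lab l != t -> G l = 0) ->
  \sum_l G l = \sum_(a < size (lab_class lab t)) G (class_ord a).
Proof.
move=> G0; rewrite (bigID (mem (lab_class lab t))) /= [X in _ + X]big1 ?addr0.
  by rewrite -big_uniq ?uniq_lab_class // big_tnth.
by move=> l; rewrite mem_lab_class => /G0.
Qed.

Lemma lab_block_mul t (X Y : 'M[F]_k) :
  is_blockdiag_mx X -> lab_block t (X *m Y) = lab_block t X *m lab_block t Y.
Proof.
move=> bdX; apply/matrixP => a b; rewrite !mxE (sum_lab_class (t := t)).
  by apply: eq_bigr => c _; rewrite !mxE.
by move=> l lab_l; rewrite bdX ?mul0r // lab_class_ord eq_sym.
Qed.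

Lemma blockdiag_mul X Y : is_blockdiag_mx X -> is_blockdiag_mx Y -> is_blockdiag_mx (X *m Y).
Proof.
move=> bdX bdY i j lab_ij; rewrite mxE big1 // => l _.
have [lab_il|/bdX->] := eqVneq (lab i) (lab l); last by rewrite mul0r.
by rewrite bdY ?mulr0 // -lab_il.
Qed.

Lemma blockdiag_mx_eq X Y : is_blockdiag_mx X -> is_blockdiag_mx Y ->
  (forall i, lab_block (lab i) X = lab_block (lab i) Y) -> X = Y.
Proof.
move=> bdX bdY eqXY; apply/matrixP => i j.
have [lab_ij|lab_ij] := eqVneq (lab i) (lab j); last by rewrite bdX ?bdY.
have lab_j : lab j == lab i by rewrite lab_ij.
by rewrite -(lab_blockE X (eqxx (lab i)) lab_j) eqXY lab_blockE.
Qed.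

Lemma blockdiag1 : is_blockdiag_mx 1%:M.
Proof. by move=> i j; rewrite mxE; case: (eqVneq i j) => [->|]; rewrite ?eqxx. Qed.

Lemma lab_block1 t : lab_block t (1%:M : 'M[F]_k) = 1%:M.
Proof. by apply/matrixP => a b; rewrite !mxE (inj_eq (@class_ord_inj _ _ lab t)). Qed.

Lemma blockdiag_diag W : is_diag_mx W -> is_blockdiag_mx W.
Proof.
by move=> /is_diag_mxP diagW i j lab_ij; apply: diagW; apply: contra_neq lab_ij => /val_inj->.
Qed.

Lemma blockdiag_assemble g : is_blockdiag_mx (lab_assemble lab 0 g).
Proof. by move=> i j /negPf lab_ij; rewrite mxE lab_ij. Qed.

Lemma lab_block_scalar i (W : 'M[F]_k) : is_diag_mx W ->
  (forall j, lab j = lab i -> W j j = W i i) -> lab_block (lab i) W = (W i i)%:M.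
Proof.
move=> /is_diag_mxP diagW constW; apply/matrixP => a b; rewrite !mxE.
have [<-|neq_ab] := eqVneq a b; first by rewrite mulr1n constW ?lab_class_ord.
by rewrite mulr0n diagW //; apply: contra_neq neq_ab => /val_inj/class_ord_inj ->.
Qed.

Lemma diag_blockdiag X : is_blockdiag_mx X ->
  (forall i, is_diag_mx (lab_block (lab i) X)) -> is_diag_mx X.
Proof.
move=> bdX diag_blocks; apply/is_diag_mxP => i j neq_ij.
have [lab_ij|/bdX//] := eqVneq (lab i) (lab j).
have lab_j : lab j == lab i by rewrite lab_ij.
rewrite -(lab_blockE X (eqxx (lab i)) lab_j).
move/is_diag_mxP: (diag_blocks i) => -> //.
by apply: contra_neq neq_ij => /val_inj/(congr1 class_ord); rewrite !class_indexK => ->.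
Qed.

Lemma blockdiag_unitmx X : is_blockdiag_mx X -> (forall i, lab_block (lab i) X \in unitmx) ->
  [/\ X \in unitmx, is_blockdiag_mx (invmx X)
    & forall i, lab_block (lab i) (invmx X) = invmx (lab_block (lab i) X)].
Proof.
move=> bdX unit_blocks.
pose Y := lab_assemble lab 0 (fun t => lab_pattern 0 (invmx (lab_block t X))).
have blockY t : lab_block t Y = invmx (lab_block t X).
  by apply/matrixP => a b; rewrite lab_block_assemble mxE lab_patternE.
have XY : X *m Y = 1%:M.
  apply: blockdiag_mx_eq => [||i]; first exact/blockdiag_mul/blockdiag_assemble.
    exact: blockdiag1.
  by rewrite lab_block_mul // blockY mulmxV // lab_block1.
have [unitX _] := mulmx1_unit XY.
have -> : invmx X = Y by rewrite -[RHS](mulKmx unitX) XY mulmx1.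
by split=> //; exact: blockdiag_assemble.
Qed.

Lemma blockdiag_commuting (Z : 'M[F]_k) :
  (forall i j, lab i != lab j ->
     exists D, [/\ is_diag_mx D, Z *m D = D *m Z & D i i != D j j]) ->
  is_blockdiag_mx Z.
Proof.
move=> separated i j /separated[D [diagD commZD neqD]].
have /eqP : Z i j * (D j j - D i i) = 0.
  move/matrixP/(_ i j): commZD; rewrite mulmx_diagr // mulmx_diagl // => ZDij.
  by rewrite mulrBr ZDij [X in _ - X]mulrC subrr.
by rewrite mulf_eq0 subr_eq0 [D j j == _]eq_sym (negPf neqD) orbF => /eqP.
Qed.

Lemma blockscalar_commute (A D : 'M[F]_k) :
  is_blockdiag_mx A -> is_diag_mx D -> (forall i j, lab i = lab j -> D i i = D j j) ->
  D *m A = A *m D.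
Proof.
move=> bdA diagD constD; have bdD := blockdiag_diag diagD.
apply: (blockdiag_mx_eq (blockdiag_mul bdD bdA) (blockdiag_mul bdA bdD)) => i.
rewrite !lab_block_mul // (lab_block_scalar diagD) => [|j /constD//].
by rewrite -scalar_mxC.
Qed.

Lemma lab_block_diagonalizable t (Z U : 'M[F]_k) :
  is_blockdiag_mx Z -> U \in unitmx -> is_diag_mx (invmx U *m Z *m U) ->
  exists Q D, diagonalization (lab_block t Z) Q D.
Proof.
move=> bdZ unitU diagZ.
(* The coordinates of the class span a [Z]-stable subspace, on which [Z] acts as its block. *)
pose V : 'M[F]_(size (lab_class lab t), k) := \matrix_(a, i) (class_ord a == i)%:R.
apply: (@diagonalization_intertwined _ _ _ V Z).
- have VVT : V *m V^T = 1%:M.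
    apply/matrixP => a b; rewrite !mxE (bigD1 (class_ord b)) //= big1.
      by rewrite !mxE eqxx mulr1 addr0 (inj_eq class_ord_inj).
    by move=> i; rewrite eq_sym => /negPf neq_i; rewrite !mxE neq_i mulr0.
  have := mxrankM_maxl V V^T; rewrite VVT mxrank1 => rankV.
  by rewrite /row_free eqn_leq rank_leq_row rankV.
- apply/matrixP => a j; rewrite !mxE (bigD1 (class_ord a)) //= big1; last first.
    by move=> i; rewrite eq_sym => /negPf neq_i; rewrite mxE neq_i mul0r.
  rewrite mxE eqxx mul1r addr0.
  have -> : Z (class_ord a) j = \sum_l Z (class_ord a) l * (l == j)%:R.
    by rewrite (bigD1 j) //= eqxx mulr1 big1 ?addr0 // => l /negPf->; rewrite mulr0.
  rewrite (sum_lab_class (t := t)); first by apply: eq_bigr => b _; rewrite !mxE.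
  by move=> l lab_l; rewrite bdZ ?mul0r // lab_class_ord eq_sym.
- by exists (invmx U); rewrite ?unitmx_inv // /similar_to /= mxred.conjVmx.
Qed.

End LabelBlockMatrices.

Definition pblock_diagonalize V (T : eqType) k (lab : 'I_k -> T) (z : V) (Z : 'M[V]_k) :
    prog V 'M[V]_k :=
  pbind (pmapM (fun t => pbind (pdiagonalize (lab_block lab t Z))
                              (fun QD => PRet V (lab_pattern z QD.1)))
              (lab_values lab))
    (fun gs => PRet V (lab_assemble lab z
                         (fun t => nth (fun _ _ => z) gs (index t (lab_values lab))))).

Lemma sum_cube_lab_class (T : eqType) k (lab : 'I_k -> T) :
  (\sum_(t <- lab_values lab) (size (lab_class lab t) ^ 3).+1 <= k ^ 3 + k)%N.
Proof.
under eq_bigr do rewrite -addn1.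
rewrite big_split /= sum1_size leq_add //; last first.
  by rewrite (leq_trans (size_undup _)) // size_map size_enum_ord.
apply: (@leq_trans (\sum_(t <- lab_values lab) k ^ 2 * size (lab_class lab t))%N).
  apply: leq_sum => t _; rewrite expnS mulnC leq_mul2r leq_exp2r //.
  by rewrite size_filter (leq_trans (count_size _ _)) ?size_enum_ord ?orbT.
by rewrite -big_distrr /= sum_size_lab_class -expnSr.
Qed.

Section BlockDiagonalize.
Context {F : fieldType} {conjf : F -> F} {T : eqType} {k : nat} (lab : 'I_k -> T).

Lemma wp_block_diagonalize (Z U : 'M[F]_k) :
  is_blockdiag_mx lab Z -> U \in unitmx -> is_diag_mx (invmx U *m Z *m U) ->
  wp conjf (pblock_diagonalize lab 0 Z) (k ^ 3 + k) (fun A =>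
    is_blockdiag_mx lab A /\ forall i, let Ai := lab_block lab (lab i) A in
      Ai \in unitmx /\ is_diag_mx (invmx Ai *m lab_block lab (lab i) Z *m Ai)).
Proof.
move=> bdZ unitU diagZ.
pose good t (g : 'I_k -> 'I_k -> F) := let Q := \matrix_(a, b) g (class_ord a) (class_ord b) in
  Q \in unitmx /\ is_diag_mx (invmx Q *m lab_block lab t Z *m Q).
have wp_blocks : wp conjf (pmapM (fun t => pbind (pdiagonalize (lab_block lab t Z))
      (fun QD => PRet F (lab_pattern 0 QD.1))) (lab_values lab))
    (\sum_(t <- lab_values lab) (size (lab_class lab t) ^ 3).+1)
    (fun gs => forall t, t \in lab_values lab ->
       good t (nth (fun _ _ => 0) gs (index t (lab_values lab)))).
  apply: wp_mapM => t _; rewrite -[_.+1]addn0; apply: wp_bind.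
  apply: wp_diagonalize => [|Q D [unitQ [diagD defZt]]]; rewrite /good /=.
    exact: lab_block_diagonalizable bdZ unitU diagZ.
  have -> : \matrix_(a, b) lab_pattern 0 Q (class_ord a) (class_ord b) = Q.
    by apply/matrixP => a b; rewrite mxE lab_patternE.
  by split=> //; rewrite defZt !mulmxA mulVmx // mul1mx mulmxKV.
rewrite -[(_ + k)%N]addn0; apply: wp_bind.
apply: wp_mono wp_blocks; first exact: sum_cube_lab_class.
move=> gs good_gs /=; split; first exact: blockdiag_assemble.
by move=> i; rewrite lab_block_assemble; apply: good_gs (lab_values_lab lab i).
Qed.

End BlockDiagonalize.

Definition idmx V k (z o : V) : 'M[V]_k := \matrix_(i, j) if i == j then o else z.

Definition prefine_labels V k (lab : 'I_k -> seq (seq bool)) (W : 'M[V]_k) :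
    prog V ('I_k -> seq (seq bool)) :=
  pbind (pmapM (fun i => pmapM (fun j => pbind (psub (W i i) (W j j)) (@peq0 V))
                               (enum 'I_k)) (enum 'I_k))
    (fun rows => PRet V (fun i : 'I_k => nth [::] rows i :: lab i)).

Definition psimdiag_step V k (z : V) (st : 'M[V]_k * 'M[V]_k * ('I_k -> seq (seq bool)))
    (X : 'M[V]_k) : prog V ('M[V]_k * 'M[V]_k * ('I_k -> seq (seq bool))) :=
  let: (P, Pi, lab) := st in
  pbind (pmulmx Pi X) (fun PiX =>
  pbind (pmulmx PiX P) (fun Z =>
  pbind (pblock_diagonalize lab z Z) (fun A =>
  pbind (pmulmx P A) (fun P' =>
  pbind (pinvertmx P') (fun Pi' =>
  pbind (pmulmx Pi' X) (fun Pi'X =>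
  pbind (pmulmx Pi'X P') (fun W =>
  pbind (prefine_labels lab W) (fun lab' =>
  PRet V (P', Pi', lab'))))))))).

Definition psimdiag V k (z o : V) (Xs : seq 'M[V]_k) : prog V ('M[V]_k * 'M[V]_k) :=
  pbind (pfoldM (psimdiag_step z) (idmx k z o, idmx k z o, fun _ => [::]) Xs)
    (fun st => PRet V (st.1.1, st.1.2)).

Definition simdiag_step_cost k := (7 * (k ^ 3).+1 + 3 * (k * k) + k)%N.

Section SimultaneousDiagonalization.
Context {F : fieldType} {conjf : F -> F} {k : nat}.
Local Notation wp := (wp conjf).
Local Notation computes := (computes conjf).

Definition diag_eq_table (W : 'M[F]_k) : seq (seq bool) :=
  [seq [seq W i i - W j j == 0 | j <- enum 'I_k] | i <- enum 'I_k].

Definition refined_labels (lab : 'I_k -> seq (seq bool)) (W : 'M[F]_k) (i : 'I_k) :=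
  nth [::] (diag_eq_table W) i :: lab i.

Lemma nth_diag_eq_table W (i : 'I_k) :
  nth [::] (diag_eq_table W) i = [seq W i i - W j j == 0 | j <- enum 'I_k].
Proof. by rewrite (nth_map i) ?size_enum_ord // nth_ord_enum. Qed.

Lemma refined_labels_eq lab W i j :
  (refined_labels lab W i == refined_labels lab W j) = (lab i == lab j) && (W i i == W j j).
Proof.
rewrite /refined_labels eqseq_cons !nth_diag_eq_table andbC; congr (_ && _).
apply/eqP/eqP => [/(congr1 (nth false ^~ i))|->//].
rewrite !(nth_map i) -?enumT ?size_enum_ord // nth_ord_enum subrr eqxx.
by move/esym; rewrite subr_eq0 => /eqP.
Qed.

Lemma computes_refine_labels lab (W : 'M[F]_k) :
  computes (prefine_labels lab W) (k * (k * 3)) (refined_labels lab W).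
Proof.
rewrite /prefine_labels -[(k * _)%N]addn0.
apply: (computes_bind (v := diag_eq_table W)); last exact: computes_ret.
rewrite -[k in (k * _)%N](size_enum_ord k); apply: computes_mapM => i _.
rewrite -[k in (k * _)%N](size_enum_ord k); apply: computes_mapM => j _.
exact (computes_bind (computes_sub (x := W i i) (y := W j j)) (computes_eq0 (x := W i i - W j j))).
Qed.

Definition simdiag_inv (done : seq 'M[F]_k)
    (st : 'M[F]_k * 'M[F]_k * ('I_k -> seq (seq bool))) :=
  let: (P, Pi, lab) := st in
  [/\ P \in unitmx, Pi = invmx P,
      forall Y, Y \in done -> is_diag_mx (Pi *m Y *m P)
    & forall i j, (lab i == lab j) = all (fun Y => (Pi *m Y *m P) i i == (Pi *m Y *m P) j j) done].

Lemma simdiag_inv_rcons done X P lab (A : 'M[F]_k) :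
  let Z := invmx P *m X *m P in
  simdiag_inv done (P, invmx P, lab) -> is_blockdiag_mx lab Z -> is_blockdiag_mx lab A ->
  (forall i, let Ai := lab_block lab (lab i) A in
     Ai \in unitmx /\ is_diag_mx (invmx Ai *m lab_block lab (lab i) Z *m Ai)) ->
  simdiag_inv (rcons done X)
    (P *m A, invmx (P *m A), refined_labels lab (invmx (P *m A) *m X *m (P *m A))).
Proof.
move=> Z [unitP _ diag_old lab_old] bdZ bdA blocksA.
have [unitA bdAi blockAi] := blockdiag_unitmx bdA (fun i => (blocksA i).1).
have conjA Y : invmx (P *m A) *m Y *m (P *m A) = invmx A *m (invmx P *m Y *m P) *m A.
  by rewrite invmxM // !mulmxA.
have old_fixed Y : Y \in done -> invmx (P *m A) *m Y *m (P *m A) = invmx P *m Y *m P.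
  move=> done_Y; rewrite conjA -mulmxA (blockscalar_commute bdA (diag_old Y done_Y)).
    by rewrite (mulKmx unitA).
  by move=> i j /eqP; rewrite lab_old => /allP/(_ Y done_Y)/eqP.
have diag_new : is_diag_mx (invmx (P *m A) *m X *m (P *m A)).
  rewrite conjA -/Z; apply: diag_blockdiag => [|i].
    exact: blockdiag_mul (blockdiag_mul bdAi bdZ) bdA.
  rewrite (lab_block_mul _ _ (blockdiag_mul bdAi bdZ)) (lab_block_mul _ _ bdAi) blockAi.
  exact: (blocksA i).2.
split=> [||Y|i j]; first by rewrite unitmx_mul unitP.
- by [].
- by rewrite mem_rcons inE => /predU1P[->//|/[dup]/old_fixed->]; apply: diag_old.
rewrite refined_labels_eq lab_old all_rcons andbC; congr (_ && _).
by apply: eq_in_all => Y /old_fixed->.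
Qed.

Variables (Xs : seq 'M[F]_k) (T0 : 'M[F]_k).
Hypotheses (unitT0 : T0 \in unitmx)
  (diagT0 : forall X, X \in Xs -> is_diag_mx (invmx T0 *m X *m T0)).

Lemma codiag_commute X Y : X \in Xs -> Y \in Xs -> X *m Y = Y *m X.
Proof.
move=> Xs_X Xs_Y.
have conjK M : T0 *m (invmx T0 *m M *m T0) *m invmx T0 = M.
  by rewrite !mulmxA mulmxV // mul1mx mulmxK.
have conjM M N : T0 *m M *m invmx T0 *m (T0 *m N *m invmx T0) = T0 *m (M *m N) *m invmx T0.
  by rewrite !mulmxA (mulmxKV unitT0).
by rewrite -(conjK X) -(conjK Y) !conjM (comm_diag_mx (diagT0 Xs_X) (diagT0 Xs_Y)).
Qed.

Lemma wp_simdiag_step s1 X s2 st : Xs = s1 ++ X :: s2 -> simdiag_inv s1 st ->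
  wp (psimdiag_step 0 st X) (simdiag_step_cost k) (simdiag_inv (rcons s1 X)).
Proof.
move=> def_Xs; case: st => [[P Pi] lab] inv_s1.
have [unitP def_Pi diag_old lab_old] := inv_s1; subst Pi.
have Xs_X : X \in Xs by rewrite def_Xs mem_cat mem_head orbT.
pose D Y := invmx P *m Y *m P.
have D_mul Y Y' : D Y *m D Y' = D (Y *m Y').
  by rewrite /D !mulmxA (mulmxK unitP).
have bdZ : is_blockdiag_mx lab (D X).
  apply: blockdiag_commuting => i j; rewrite lab_old => /allPn[Y s1_Y neqY].
  exists (D Y); split=> //; first exact: diag_old.
  by rewrite !D_mul codiag_commute // def_Xs mem_cat s1_Y.
have unitU : invmx P *m T0 \in unitmx by rewrite unitmx_mul unitmx_inv unitP.
have diagU : is_diag_mx (invmx (invmx P *m T0) *m D X *m (invmx P *m T0)).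
  by rewrite invmxM ?unitmx_inv // invmxK /D !mulmxA !(mulmxK unitP); exact: diagT0.
rewrite /psimdiag_step; eapply wp_le; last first.
- apply: wp_bind_computes; first exact: computes_mulmx.
  apply: wp_bind_computes; first exact: computes_mulmx.
  apply: wp_bind.
  apply: wp_mono (leqnn _) _ (wp_block_diagonalize bdZ unitU diagU) => A [bdA blocksA].
  have [unitA _ _] := blockdiag_unitmx bdA (fun i => (blocksA i).1).
  apply: wp_bind_computes; first exact: computes_mulmx.
  apply: wp_bind_computes; first by apply: computes_invertmx; rewrite unitmx_mul unitP.
  apply: wp_bind_computes; first exact: computes_mulmx.
  apply: wp_bind_computes; first exact: computes_mulmx.
  apply: wp_bind_computes; first exact: computes_refine_labels.
  by apply: wp_ret; apply: simdiag_inv_rcons.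
- rewrite /simdiag_step_cost; lia.
Qed.

Lemma wp_simdiag : wp (psimdiag 0 1 Xs) (size Xs * simdiag_step_cost k) (fun PPi =>
  [/\ PPi.1 \in unitmx, PPi.2 = invmx PPi.1
    & forall X, X \in Xs -> is_diag_mx (PPi.2 *m X *m PPi.1)]).
Proof.
have idmx1 : idmx k 0 1 = 1%:M :> 'M[F]_k.
  by apply/matrixP => i j; rewrite !mxE; case: eqP.
rewrite /psimdiag idmx1 -[(_ * _)%N]addn0 -sum1_size big_distrl /= mul1n; apply: wp_bind.
apply: wp_mono (wp_foldM (c := fun _ => simdiag_step_cost k) (Inv := simdiag_inv) _ _) => //.
- by case=> [[P Pi] lab] [].
- by move=> s1 X s2 st def_Xs; apply: wp_simdiag_step def_Xs.
- by split; rewrite ?unitmx1 ?invmx1 // => [Y|i j]; rewrite in_nil.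
Qed.

End SimultaneousDiagonalization.

Definition stride_block V n b (z : V) (M : 'M[V]_n) (p q : nat) : 'M[V]_(n %/ b) :=
  \matrix_(i, j) mx_at z M (i * b + p)%N (j * b + q)%N.

Definition bdiag_mx V n m (z : V) (Ls : seq 'M[V]_m) : 'M[V]_n :=
  \matrix_(i, j) if (i %/ m == j %/ m)%N
                 then mx_at z (nth (const_mx z) Ls (i %/ m)) (i %% m) (j %% m) else z.

Definition stride_diag_mx V n b (z : V) (Dss : seq (seq 'M[V]_(n %/ b))) : 'M[V]_n :=
  \matrix_(i, j) if (i %/ b == j %/ b)%N
                 then mx_at z (nth (const_mx z) (nth [::] Dss (i %% b)) (j %% b)) (i %/ b) (i %/ b)
                 else z.

Section StrideBlocks.
Variables (F : fieldType) (b n : nat).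
Hypotheses (b_gt0 : (0 < b)%N) (b_dvd_n : (b %| n)%N).
Local Notation m := (n %/ b)%N.
Local Notation sb X p q := (stride_block b 0 X p q).
Local Notation P := (Pbn F b n).

Lemma n_eq_mb : n = (m * b)%N.
Proof. by rewrite divnK. Qed.

Lemma stride_lt (i1 : 'I_m) (p : 'I_b) : (i1 * b + p < n)%N.
Proof.
have lt_i1 := ltn_ord i1; have lt_p := ltn_ord p; have En := n_eq_mb.
by set mm := (n %/ b)%N in lt_i1 En *; rewrite En; nia.
Qed.

Definition stride_ord (i1 : 'I_m) (p : 'I_b) : 'I_n := Ordinal (stride_lt i1 p).

Lemma stride_ord_div i1 p : (stride_ord i1 p %/ b)%N = i1.
Proof. by rewrite /= divnMDl // (divn_small (ltn_ord p)) addn0. Qed.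

Lemma stride_ord_mod i1 p : (stride_ord i1 p %% b)%N = p.
Proof. by rewrite /= modnMDl (modn_small (ltn_ord p)). Qed.

Lemma stride_split_lt (i : 'I_n) : (i %/ b < m)%N.
Proof. by rewrite ltn_divLR // -n_eq_mb. Qed.

Definition stride_split (i : 'I_n) : 'I_m * 'I_b :=
  (Ordinal (stride_split_lt i), Ordinal (ltn_pmod i b_gt0)).

Lemma stride_splitK i : stride_ord (stride_split i).1 (stride_split i).2 = i.
Proof. by apply: val_inj; rewrite /= -divn_eq. Qed.

Lemma stride_ordK i1 p : stride_split (stride_ord i1 p) = (i1, p).
Proof. by congr pair; apply: val_inj; rewrite /= ?stride_ord_div ?stride_ord_mod. Qed.

Lemma sum_stride (G : 'I_n -> F) :
  \sum_l G l = \sum_(l1 < m) \sum_(l0 < b) G (stride_ord l1 l0).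
Proof.
rewrite pair_big /= (reindex (fun x : 'I_m * 'I_b => stride_ord x.1 x.2)) //.
by exists stride_split => [[i1 p] _|i _]; rewrite ?stride_ordK ?stride_splitK.
Qed.

Lemma stride_blockE (X : 'M[F]_n) (p q : 'I_b) i1 j1 :
  sb X p q i1 j1 = X (stride_ord i1 p) (stride_ord j1 q).
Proof. by rewrite mxE; exact: (mx_atE 0 X (stride_ord i1 p) (stride_ord j1 q)). Qed.

Lemma stride_block_inj (X Y : 'M[F]_n) :
  (forall p q : 'I_b, sb X p q = sb Y p q) -> X = Y.
Proof.
move=> eqXY; apply/matrixP => i j; rewrite -(stride_splitK i) -(stride_splitK j).
by rewrite -!stride_blockE eqXY.
Qed.

Lemma stride_block_mull (X Y : 'M[F]_n) (p q : 'I_b) :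
  is_DB b X -> sb (X *m Y) p q = sb X p p *m sb Y p q.
Proof.
move=> dbX; apply/matrixP => i1 j1; rewrite stride_blockE !mxE sum_stride.
apply: eq_bigr => l1 _; rewrite (bigD1 p) //= big1 ?addr0 => [|l0 neq_l0].
  by rewrite !stride_blockE.
by rewrite dbX ?mul0r // !stride_ord_mod eq_sym.
Qed.

Lemma stride_block_mulr (X Y : 'M[F]_n) (p q : 'I_b) :
  is_DB b Y -> sb (X *m Y) p q = sb X p q *m sb Y q q.
Proof.
move=> dbY; apply/matrixP => i1 j1; rewrite stride_blockE !mxE sum_stride.
apply: eq_bigr => l1 _; rewrite (bigD1 q) //= big1 ?addr0 => [|l0 neq_l0].
  by rewrite !stride_blockE.
by rewrite dbY ?mulr0 // !stride_ord_mod.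
Qed.

Lemma stride_block_diag (R : 'M[F]_n) (p q : 'I_b) : is_BD b R -> is_diag_mx (sb R p q).
Proof.
move=> bdR; apply/is_diag_mxP => i1 j1 neq_ij; rewrite stride_blockE bdR //.
by rewrite !stride_ord_div.
Qed.

Lemma stride_block1 (p : 'I_b) : sb (1%:M : 'M[F]_n) p p = 1%:M.
Proof.
have inj_p : injective (stride_ord ^~ p).
  by move=> x y /(congr1 stride_split); rewrite !stride_ordK => -[].
by apply/matrixP => i1 j1; rewrite stride_blockE !mxE (inj_eq inj_p).
Qed.

Lemma stride_block_unitmx (G : 'M[F]_n) (p : 'I_b) :
  is_DB b G -> G \in unitmx -> sb G p p \in unitmx.
Proof.
move=> dbG unitG; have GGi : sb G p p *m sb (invmx G) p p = 1%:M.
  by rewrite -stride_block_mull // mulmxV // stride_block1.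
by case: (mulmx1_unit GGi).
Qed.

Lemma stride_block_BD_unitmx (R : 'M[F]_n) (p q : 'I_b) : is_BD b R ->
  (forall i j : 'I_n, (i %/ b)%N = (j %/ b)%N -> R i j != 0) -> sb R p q \in unitmx.
Proof.
move=> bdR R_neq0; apply: diag_unitmx => [|k]; first exact: stride_block_diag.
by rewrite stride_blockE R_neq0 // !stride_ord_div.
Qed.


Lemma sigma_lt (i : 'I_n) : (sigma_bn b n i < n)%N.
Proof.
have lt_mod := ltn_pmod i b_gt0; have lt_div := stride_split_lt i; have En := n_eq_mb.
by rewrite /sigma_bn; set mm := (n %/ b)%N in lt_div En *; rewrite [in X in (_ < X)%N]En; nia.
Qed.

Definition sigma_ord (i : 'I_n) : 'I_n := Ordinal (sigma_lt i).

Lemma sigma_ord_div i : (sigma_ord i %/ m)%N = (i %% b)%N.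
Proof.
have m_gt0 : (0 < m)%N by apply: leq_ltn_trans (stride_split_lt i).
by rewrite /= /sigma_bn divnMDl // (divn_small (stride_split_lt i)) addn0.
Qed.

Lemma sigma_ord_mod i : (sigma_ord i %% m)%N = (i %/ b)%N.
Proof. by rewrite /= /sigma_bn modnMDl (modn_small (stride_split_lt i)). Qed.

Lemma Pbn_conjE (L : 'M[F]_n) i j : (P^T *m L *m P) i j = L (sigma_ord i) (sigma_ord j).
Proof.
have Pcol l j' : P l j' = (l == sigma_ord j')%:R by rewrite mxE.
rewrite mxE (bigD1 (sigma_ord j)) //= big1 ?addr0 => [|l /negPf neq_l]; last first.
  by rewrite Pcol neq_l mulr0.
rewrite Pcol eqxx mulr1 mxE (bigD1 (sigma_ord i)) //= big1 ?addr0 => [|l /negPf neq_l].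
  by rewrite mxE Pcol eqxx mul1r.
by rewrite mxE Pcol neq_l mul0r.
Qed.

Lemma is_DB_PLP (L : 'M[F]_n) : is_BD m L -> is_DB b (P^T *m L *m P).
Proof. by move=> bdL i j neq_ij; rewrite Pbn_conjE bdL // !sigma_ord_div. Qed.

Lemma is_BD_bdiag_mx (Ls : seq 'M[F]_m) : is_BD m (bdiag_mx n 0 Ls).
Proof. by move=> i j /negPf neq_ij; rewrite mxE neq_ij. Qed.

Lemma stride_block_bdiag_mx (Ls : seq 'M[F]_m) (p : 'I_b) :
  sb (P^T *m bdiag_mx n 0 Ls *m P) p p = nth 0 Ls p.
Proof.
apply/matrixP => i1 j1; rewrite stride_blockE Pbn_conjE mxE.
by rewrite !sigma_ord_div !sigma_ord_mod !stride_ord_mod !stride_ord_div eqxx mx_atE.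
Qed.

Lemma is_BD_stride_diag_mx (Dss : seq (seq 'M[F]_m)) : is_BD b (stride_diag_mx 0 Dss).
Proof. by move=> i j /negPf neq_ij; rewrite mxE neq_ij. Qed.

Lemma stride_block_stride_diag_mx (Dss : seq (seq 'M[F]_m)) (p q : 'I_b) :
  is_diag_mx (nth 0 (nth [::] Dss p) q) ->
  sb (stride_diag_mx 0 Dss) p q = nth 0 (nth [::] Dss p) q.
Proof.
move=> /is_diag_mxP diagD; apply/matrixP => i1 j1.
rewrite stride_blockE mxE !stride_ord_div !stride_ord_mod val_eqE.
by have [<-|neq_ij] := eqVneq i1 j1; rewrite ?mx_atE // diagD.
Qed.

Lemma stride_block_PLP_R_PLP (L1 R L2 : 'M[F]_n) (p q : 'I_b) :
  is_BD m L1 -> is_BD b R -> is_BD m L2 ->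
  sb (PLP_R_PLP b L1 R L2) p q =
  sb (P^T *m L1 *m P) p p *m sb R p q *m sb (P^T *m L2 *m P) q q.
Proof.
move=> bdL1 bdR bdL2.
rewrite /PLP_R_PLP (stride_block_mulr _ _ _ (is_DB_PLP bdL2)).
by rewrite (stride_block_mull _ _ _ (is_DB_PLP bdL1)).
Qed.

End StrideBlocks.

Section Pencil.
Variables (F : fieldType) (m : nat) (N : nat -> nat -> 'M[F]_m).

Definition pencil_K q := invmx (N 0 0) *m N 0 q.

Definition pencil_X p q := invmx (N p 0) *m N p q *m invmx (pencil_K q).

Lemma pencil_factor (P : 'M[F]_m) p q :
  P \in unitmx -> N p 0 \in unitmx -> pencil_K q \in unitmx ->
  N p q = N p 0 *m P *m (invmx P *m pencil_X p q *m P) *m (invmx P *m pencil_K q).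
Proof.
rewrite /pencil_X; move: (pencil_K q) => K unitP unitNp0 unitK.
by rewrite !mulmxA !(mulmxK unitP) (mulmxKV unitK) mulmxV ?mul1mx.
Qed.

Variables (b : nat) (A B : nat -> 'M[F]_m) (D : nat -> nat -> 'M[F]_m).
Hypotheses (b_gt0 : (0 < b)%N)
  (defN : forall p q, (p < b)%N -> (q < b)%N -> N p q = A p *m D p q *m B q)
  (unitA : forall p, (p < b)%N -> A p \in unitmx)
  (unitB : forall q, (q < b)%N -> B q \in unitmx)
  (diagD : forall p q, (p < b)%N -> (q < b)%N -> is_diag_mx (D p q))
  (unitD : forall p q, (p < b)%N -> (q < b)%N -> D p q \in unitmx).

Lemma pencil_unitmx p q : (p < b)%N -> (q < b)%N -> N p q \in unitmx.
Proof. by move=> lt_p lt_q; rewrite defN // !unitmx_mul unitA // unitD // unitB. Qed.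

Lemma pencil_X_codiag p q : (p < b)%N -> (q < b)%N ->
  is_diag_mx (invmx (invmx (B 0)) *m pencil_X p q *m invmx (B 0)).
Proof.
move=> lt_p lt_q; have unitB0 := unitB b_gt0.
pose E := invmx (D p 0) *m D p q *m invmx (D 0 q) *m D 0 0.
have defK : pencil_K q = invmx (B 0) *m (invmx (D 0 0) *m D 0 q) *m B q.
  rewrite /pencil_K !defN // !invmxM ?unitmx_mul ?unitA ?unitB ?unitD //.
  by rewrite !mulmxA (mulmxKV (unitA b_gt0)).
have defX : pencil_X p q = invmx (B 0) *m E *m B 0.
  rewrite /pencil_X defK !defN // !invmxM ?unitmx_mul ?unitmx_inv ?unitA ?unitB ?unitD //.
  by rewrite !invmxK /E !mulmxA (mulmxKV (unitA lt_p)) (mulmxK (unitB lt_q)).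
rewrite invmxK defX !mulmxA (mulmxK unitB0) mulmxV // mul1mx.
by rewrite /E !diag_mulmx ?diag_invmx ?diagD.
Qed.

End Pencil.

Definition ppencil V m b (z : V) (N : nat -> nat -> 'M[V]_m) :
    prog V (seq 'M[V]_m * seq (seq 'M[V]_m)) :=
  let bs := iota 0 b in
  pbind (pinvertmx (N 0 0)%N) (fun N00i =>
  pbind (pmapM (fun q => pmulmx N00i (N 0 q)%N) bs) (fun Ks =>
  pbind (pmapM (fun p => pinvertmx (N p 0)%N) bs) (fun Np0is =>
  pbind (pmapM (fun q => pinvertmx (nth (const_mx z) Ks q)) bs) (fun Kis =>
  pbind (pmapM (fun p => pmapM (fun q =>
           pbind (pmulmx (nth (const_mx z) Np0is p) (N p q))
                 (fun Y => pmulmx Y (nth (const_mx z) Kis q))) bs) bs) (fun Xss =>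
  PRet V (Ks, Xss)))))).

Definition pfactors V m b (z : V) (N : nat -> nat -> 'M[V]_m) (Xss : seq (seq 'M[V]_m))
    (Ks : seq 'M[V]_m) (P Pi : 'M[V]_m) : prog V (seq 'M[V]_m * seq (seq 'M[V]_m) * seq 'M[V]_m) :=
  let bs := iota 0 b in
  pbind (pmapM (fun p => pmulmx (N p 0)%N P) bs) (fun Ls =>
  pbind (pmapM (fun p => pmapM (fun q =>
           pbind (pmulmx Pi (nth (const_mx z) (nth [::] Xss p) q))
                 (fun Y => pmulmx Y P)) bs) bs) (fun Dss =>
  pbind (pmapM (fun q => pmulmx Pi (nth (const_mx z) Ks q)) bs) (fun Rs =>
  PRet V (Ls, Dss, Rs)))).

Definition pencil_cost m b := ((1 + 3 * b + 2 * (b * b)) * (m ^ 3).+1)%N.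

Definition factors_cost m b := ((2 * b + 2 * (b * b)) * (m ^ 3).+1)%N.

Section PencilPrograms.
Context {F : fieldType} {conjf : F -> F}.
Variables (m b : nat) (N : nat -> nat -> 'M[F]_m).

Lemma computes_ppencil : (0 < b)%N ->
  (forall p q, (p < b)%N -> (q < b)%N -> N p q \in unitmx) ->
  computes conjf (ppencil b 0 N) (pencil_cost m b)
    (mkseq (pencil_K N) b, mkseq (fun p => mkseq (pencil_X N p) b) b).
Proof.
move=> b_gt0 unitN; have unitK q : (q < b)%N -> pencil_K N q \in unitmx.
  by move=> lt_q; rewrite unitmx_mul unitmx_inv !unitN.
have iota_lt p : p \in iota 0 b -> (p < b)%N by rewrite mem_iota.
eapply computes_weaken; last first.
  apply: computes_bind; first exact: computes_invertmx (unitN _ _ b_gt0 b_gt0).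
  apply: computes_bind; first by apply: computes_mapM => q _; exact: computes_mulmx.
  apply: (computes_bind (v := mkseq (fun p => invmx (N p 0)) b)).
    by apply: computes_mapM => p /iota_lt lt_p; exact/computes_invertmx/unitN.
  apply: (computes_bind (v := mkseq (fun q => invmx (pencil_K N q)) b)).
    by apply: computes_mapM => q /iota_lt lt_q; rewrite nth_mkseq //; exact/computes_invertmx/unitK.
  apply: computes_bind; last exact: computes_ret.
  apply: computes_mapM => p /iota_lt lt_p; apply: computes_mapM => q /iota_lt lt_q.
  by rewrite !nth_mkseq //; apply: computes_bind; exact: computes_mulmx.
by rewrite /pencil_cost size_iota; nia.
Qed.

Lemma computes_pfactors Xss Ks (P Pi : 'M[F]_m) :
  computes conjf (pfactors b 0 N Xss Ks P Pi) (factors_cost m b)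
    (mkseq (fun p => N p 0 *m P) b,
     mkseq (fun p => mkseq (fun q => Pi *m nth 0 (nth [::] Xss p) q *m P) b) b,
     mkseq (fun q => Pi *m nth 0 Ks q) b).
Proof.
eapply computes_weaken; last first.
  apply: computes_bind; first by apply: computes_mapM => p _; exact: computes_mulmx.
  apply: computes_bind.
    apply: computes_mapM => p _; apply: computes_mapM => q _.
    by apply: computes_bind; exact: computes_mulmx.
  apply: computes_bind; last exact: computes_ret.
  by apply: computes_mapM => q _; exact: computes_mulmx.
by rewrite /factors_cost size_iota; nia.
Qed.

End PencilPrograms.

Definition alg_factor : algorithm := fun V n b M =>
  pbind (plit V 0) (fun z =>
  pbind (plit V 1) (fun o =>
  let N := stride_block b z M in
  pbind (ppencil b z N) (fun KX =>
  pbind (psimdiag z o (flatten KX.2)) (fun PPi =>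
  pbind (pfactors b z N KX.2 KX.1 PPi.1 PPi.2) (fun LDR =>
  PRet V (bdiag_mx n z LDR.1.1, stride_diag_mx z LDR.1.2, bdiag_mx n z LDR.2)))))).

Section Correctness.
Variables (F : fieldType) (b n : nat).
Hypotheses (b_gt0 : (0 < b)%N) (b_dvd_n : (b %| n)%N).
Local Notation m := (n %/ b)%N.
Local Notation P := (Pbn F b n).
Local Notation sb X p q := (stride_block b 0 X p q).

Lemma stride_pencil (M L1 R L2 : 'M[F]_n) :
  M \in unitmx -> is_BD m L1 -> is_BD m L2 -> is_BD b R ->
  (forall i j : 'I_n, (i %/ b)%N = (j %/ b)%N -> R i j != 0) -> M = PLP_R_PLP b L1 R L2 ->
  exists (A B : nat -> 'M[F]_m) (D : nat -> nat -> 'M[F]_m),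
  [/\ forall p q, (p < b)%N -> (q < b)%N -> sb M p q = A p *m D p q *m B q,
      forall p, (p < b)%N -> A p \in unitmx, forall q, (q < b)%N -> B q \in unitmx,
      forall p q, (p < b)%N -> (q < b)%N -> is_diag_mx (D p q)
    & forall p q, (p < b)%N -> (q < b)%N -> D p q \in unitmx].
Proof.
move=> unitM bdL1 bdL2 bdR R_neq0 defM.
pose G1 := P^T *m L1 *m P; pose G2 := P^T *m L2 *m P.
have dbG1 : is_DB b G1 := is_DB_PLP b_gt0 b_dvd_n bdL1.
have dbG2 : is_DB b G2 := is_DB_PLP b_gt0 b_dvd_n bdL2.
have /and3P[unitG1 _ unitG2] : [&& G1 \in unitmx, R \in unitmx & G2 \in unitmx].
  by move: unitM; rewrite defM /PLP_R_PLP !unitmx_mul -andbA.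
exists (fun p => sb G1 p p), (fun q => sb G2 q q), (fun p q => sb R p q).
split=> [p q lt_p lt_q|p lt_p|q lt_q|p q lt_p lt_q|p q lt_p lt_q].
- by rewrite defM (stride_block_PLP_R_PLP b_gt0 b_dvd_n (Ordinal lt_p) (Ordinal lt_q)).
- exact: (stride_block_unitmx b_gt0 b_dvd_n (Ordinal lt_p) dbG1).
- exact: (stride_block_unitmx b_gt0 b_dvd_n (Ordinal lt_q) dbG2).
- exact: (stride_block_diag b_gt0 b_dvd_n (Ordinal lt_p) (Ordinal lt_q) bdR).
exact: (stride_block_BD_unitmx b_gt0 b_dvd_n (Ordinal lt_p) (Ordinal lt_q) bdR).
Qed.

Lemma alg_output_correct (M : 'M[F]_n) (Q : 'M[F]_m) :
  let N := stride_block b 0 M in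
  (forall p q, (p < b)%N -> (q < b)%N -> N p q \in unitmx) -> Q \in unitmx ->
  (forall p q, (p < b)%N -> (q < b)%N -> is_diag_mx (invmx Q *m pencil_X N p q *m Q)) ->
  let Xss := mkseq (fun p => mkseq (pencil_X N p) b) b in
  let L1 := bdiag_mx n 0 (mkseq (fun p => N p 0 *m Q) b) in
  let R := stride_diag_mx 0
    (mkseq (fun p => mkseq (fun q => invmx Q *m nth 0 (nth [::] Xss p) q *m Q) b) b) in
  let L2 := bdiag_mx n 0 (mkseq (fun q => invmx Q *m nth 0 (mkseq (pencil_K N) b) q) b) in
  is_BD m L1 /\ is_BD m L2 /\ is_BD b R /\ M = PLP_R_PLP b L1 R L2.
Proof.
move=> N unitN unitQ diagX Xss L1 R L2.
have bdL1 : is_BD m L1 := is_BD_bdiag_mx _.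
have bdL2 : is_BD m L2 := is_BD_bdiag_mx _.
have bdR : is_BD b R := is_BD_stride_diag_mx _.
do 3!split=> //; apply: (stride_block_inj b_gt0 b_dvd_n) => p q.
rewrite (stride_block_PLP_R_PLP b_gt0 b_dvd_n p q bdL1 bdR bdL2).
rewrite !(stride_block_bdiag_mx b_gt0 b_dvd_n) (stride_block_stride_diag_mx b_gt0 b_dvd_n);
  rewrite !nth_mkseq //; last exact: diagX.
apply: pencil_factor => //; first exact: unitN.
by rewrite unitmx_mul unitmx_inv !unitN.
Qed.

End Correctness.

Lemma size_flatten_mkseq T b (f : nat -> nat -> T) :
  size (flatten (mkseq (fun p => mkseq (f p) b) b)) = (b * b)%N.
Proof.
rewrite size_flatten /shape -map_comp (eq_map (g := fun=> b)) => [|p /=]; last exact: size_mkseq.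
have sumn_const (s : seq nat) : sumn (map (fun=> b) s) = (b * size s)%N.
  by elim: s => [|_ s IHs] /=; rewrite ?muln0 // IHs mulnS.
by rewrite sumn_const size_iota.
Qed.

Lemma alg_cost_le m b : (0 < m)%N -> (0 < b)%N ->
  (1 + (1 + (pencil_cost m b + (b * b * simdiag_step_cost m + (factors_cost m b + 0))))
    <= 100 * (m ^ 3 * b ^ 2))%N.
Proof.
move=> m_gt0 b_gt0; rewrite /pencil_cost /factors_cost /simdiag_step_cost.
have m3 : (m ^ 3 = m * m * m)%N by rewrite !expnS expn0 muln1 mulnA.
have b2 : (b ^ 2 = b * b)%N by rewrite !expnS expn0 muln1.
rewrite m3 b2; nia.
Qed.

Lemma mem_flatten_mkseq (T : eqType) b (f : nat -> nat -> T) x :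
  x \in flatten (mkseq (fun p => mkseq (f p) b) b) ->
  exists p q, [/\ (p < b)%N, (q < b)%N & x = f p q].
Proof.
move=> /flatten_mapP[p]; rewrite mem_iota => lt_p /mapP[q]; rewrite mem_iota => lt_q ->.
by exists p, q.
Qed.

Lemma alg_factor_solves (F : fieldType) (conjf : F -> F) : solves_within alg_factor 100 conjf.
Proof.
move=> n b M b_gt1 b_lt_n b_dvd_n _ unitM [L1 [R [L2 [bdL1 [bdL2 [bdR [R_neq0 defM]]]]]]].
have b_gt0 : (0 < b)%N by apply: ltnW.
have [A [B [D [defN unitA unitB diagD unitD]]]] :=
  stride_pencil b_gt0 b_dvd_n unitM bdL1 bdL2 bdR R_neq0 defM.
have unitN := pencil_unitmx defN unitA unitB unitD.
have codiag := pencil_X_codiag b_gt0 defN unitA unitB diagD unitD.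
have unitT0 : invmx (B 0) \in unitmx by rewrite unitmx_inv unitB.
rewrite /alg_factor; eapply wp_le; last first.
- apply: wp_bind_computes; first exact: computes_lit0.
  apply: wp_bind_computes; first exact: computes_lit1.
  apply: wp_bind_computes; first exact: computes_ppencil.
  apply: wp_bind; apply: wp_mono (leqnn _) _ (wp_simdiag unitT0 _) => [[Q Qi] /= [unitQ -> diagQ]|];
    last first.
    by move=> X /mem_flatten_mkseq[p [q [lt_p lt_q ->]]]; apply: codiag.
  apply: wp_bind_computes; first exact: computes_pfactors.
  apply: wp_ret; apply: alg_output_correct => // p q lt_p lt_q.
  apply: diagQ; apply/flatten_mapP; exists p; rewrite ?mem_iota //.
  by apply: map_f; rewrite mem_iota.
have m_gt0 : (0 < n %/ b)%N by rewrite divn_gt0 // ltnW.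
have -> : (n ^ 3 %/ b = (n %/ b) ^ 3 * b ^ 2)%N.
  by rewrite -{1}(divnK b_dvd_n) expnMn [(b ^ 3)%N]expnS mulnCA mulKn.
by rewrite size_flatten_mkseq; apply: alg_cost_le.
Qed.

Theorem theoremD2 :
  exists (alg : algorithm) (C : nat),
    (forall R : rcfType, @solves_within alg C R (fun x : R => x)) /\
    (forall R : rcfType, @solves_within alg C (complex R) (@conjc R)).
Proof. by exists alg_factor, 100%N; split=> R; apply: alg_factor_solves. Qed.
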